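(* Let $k\ge 1$ and let $G$ be a graph obtained as a $k$-clique-sum of graphs $G_1$ and $G_2$, with common clique $K=\{v_1,\dots,v_k\}$. For $i=1,2$ let $G_i'=G_i\cap G$ (the subgraph of $G$ with vertex set $V(G_i)$ and edge set $E(G_i)\cap E(G)$). Let $\ell$ be an integer. Suppose that $G_1'$ has an AT-orientation $D_1'$ with $\Delta^+(D_1')\le \ell$, and that $G_2$ has an AT-orientation $D_2$ with $\Delta^+(D_2)\le\ell$ and $d^+_{D_2}(v_i)=i-1$ for $i=1,\dots,k$. Then $G$ has an AT-orientation $D$ such that $\Delta^+(D)\le\ell$ and $d_D^+(v)=d_{D_1'}^+(v)$ for every $v\in V(G_1)$.
   Context: All graphs are finite, simple and undirected. A clique of a graph is a nonempty vertex subset inducing a complete subgraph. Given vertex-disjoint graphs $G_1,G_2$, cliques $X_i\subset V(G_i)$ with $|X_1|=|X_2|=k$, and a bijection $f:X_1\to X_2$, a $k$-clique-sum of $G_1$ and $G_2$ is any graph obtained from $G_1\cup G_2$ by identifying $x$ with $f(x)$ for every $x\in X_1$ and then possibly deleting some edges of the resulting common clique. For an orientation $D$ of a graph, $d_D^+(v)$ is the out-degree of $v$ and $\Delta^+(D)$ the maximum out-degree. An Eulerian subdigraph of $D$ is a spanning subdigraph $H$ with $d_H^+(v)=d_H^-(v)$ for all vertices $v$ (including the one with no arcs); $EE(D)$ (resp. $OE(D)$) is the set of Eulerian subdigraphs with an even (resp. odd) number of arcs. An orientation $D$ is an AT-orientation if $|EE(D)|\ne|OE(D)|$. *)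

From mathcomp Require Import all_boot all_order all_algebra.
Set Implicit Arguments. Unset Strict Implicit. Unset Printing Implicit Defensive.

Section Defs.
Variable T : finType.

Definition sgraph (V : {set T}) (e : rel T) : Prop :=
  [/\ forall x y, e x y = e y x,
      forall x, ~~ e x x &
      forall x y, e x y -> (x \in V) && (y \in V)].

Definition is_clique (e : rel T) (K : {set T}) : Prop :=
  K != set0 /\ forall x y, x \in K -> y \in K -> x != y -> e x y.

(* d (a relation, d x y meaning arc x -> y) is an orientation of the graph e. *)
Definition is_orientation (e d : rel T) : Prop :=
  (forall x y, d x y -> e x y) /\ (forall x y, e x y -> d x y (+) d y x).

Definition arcs (d : rel T) : {set T * T} := [set p | d p.1 p.2].

Definition outdeg (d : rel T) (v : T) : nat := #|[set y | d v y]|.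

Definition eulerian (d : rel T) (H : {set T * T}) : bool :=
  (H \subset arcs d) &&
  [forall v, #|[set p in H | p.1 == v]| == #|[set p in H | p.2 == v]|].

Definition EE (d : rel T) : {set {set T * T}} :=
  [set H | eulerian d H & ~~ odd #|H|].
Definition OE (d : rel T) : {set {set T * T}} :=
  [set H | eulerian d H & odd #|H|].

Definition AT_orientation (d : rel T) : bool := #|EE d| != #|OE d|.

End Defs.

From mathcomp Require Import all_boot all_order all_algebra.
Import GRing.Theory Num.Theory.
Local Open Scope ring_scope.
Set Implicit Arguments. Unset Strict Implicit.

(* In D2 the clique K is closed under out-arcs and acyclic: by induction on i,
   v_i points exactly to v_0, ..., v_(i-1).  A potential that never increases
   along arcs is constant along the arcs of any Eulerian subdigraph, because the
   tails and the heads of an Eulerian arc set have the same potential sum.  So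
   no Eulerian subdigraph of D2 meets K, and in the orientation D that agrees
   with D1' at tails in V1 and with D2 elsewhere no Eulerian subdigraph uses an
   arc from V2 \ K into K.  The Eulerian subdigraphs of D are thus exactly the
   disjoint unions of one of D1' and one of D2 - K, and the signed count
   |EE| - |OE| = sum_H (-1)^|H| is multiplicative. *)

Lemma sum_subsetU (X : finType) (R : nmodType) (A B : {set X}) (F : {set X} -> R) :
    [disjoint A & B] ->
  \sum_(Y : {set X} | Y \subset A :|: B) F Y =
  \sum_(Y1 : {set X} | Y1 \subset A) \sum_(Y2 : {set X} | Y2 \subset B) F (Y1 :|: Y2).
Proof.
move=> disj; rewrite pair_big_dep /=.
rewrite (reindex_onto (fun Y : {set X} * {set X} => Y.1 :|: Y.2)
                     (fun Y => (Y :&: A, Y :&: B))) /=; last first.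
  by move=> Y sY; rewrite -setIUr (setIidPl sY).
apply: eq_bigl => -[Y1 Y2] /=; apply/andP/andP => [[_ /eqP [<- <-]]|[s1 s2]].
  by rewrite !subsetIr.
rewrite subUset (subset_trans s1 (subsetUl _ _)) (subset_trans s2 (subsetUr _ _)).
rewrite !setIUl (setIidPl s1) (setIidPl s2).
rewrite (disjoint_setI0 (disjointWl s1 disj)) [Y2 :&: A]setIC.
by rewrite (disjoint_setI0 (disjointWr s2 disj)) setU0 set0U.
Qed.

Section Eulerian.
Variable T : finType.
Implicit Types (d : rel T) (H : {set T * T}) (S : {set T}).

Lemma in_arcs d p : (p \in arcs d) = d p.1 p.2.
Proof. by rewrite inE. Qed.

Definition balanced_at H x :=
  #|[set p in H | p.1 == x]| == #|[set p in H | p.2 == x]|.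
Definition balanced H := [forall x, balanced_at H x].

Lemma eulerianE d H : eulerian d H = (H \subset arcs d) && balanced H.
Proof. by []. Qed.

Lemma balanced_sum H (phi : T -> nat) : balanced H ->
  (\sum_(p in H) phi p.1 = \sum_(p in H) phi p.2)%N.
Proof.
move=> /forallP bal.
have by_endpoint (f : T * T -> T) :
    (\sum_(p in H) phi (f p) = \sum_x #|[set p in H | f p == x]| * phi x)%N.
  rewrite (partition_big f xpredT) //=; apply: eq_bigr => x _.
  rewrite -sum_nat_const; apply: eq_big => [p|p /andP[_ /eqP ->]] //.
  by rewrite inE.
by rewrite !by_endpoint; apply: eq_bigr => x _; rewrite (eqP (bal x)).
Qed.

Lemma balanced_potential H (phi : T -> nat) : balanced H ->
  {in H, forall p, phi p.2 <= phi p.1}%N -> {in H, forall p, phi p.1 = phi p.2}.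
Proof.
move=> bal desc p pH.
have := (leqif_sum (fun q (qH : q \in H) => leqif_eq (desc q qH))).2.
by rewrite balanced_sum // eqxx => /esym/forall_inP/(_ p pH)/eqP.
Qed.

Lemma eulerian_level d d' (phi : T -> nat) :
    (forall x y, d x y -> phi y <= phi x)%N ->
    (forall x y, d' x y = d x y && (phi x == phi y)) ->
  eulerian d =1 eulerian d'.
Proof.
move=> desc level H; rewrite !eulerianE.
case bal: (balanced H); rewrite ?andbF ?andbT //.
apply/idP/idP => /subsetP sub; apply/subsetP => p pH; move: (sub p pH).
  have desc_H : {in H, forall q, phi q.2 <= phi q.1}%N.
    by move=> q /sub; rewrite in_arcs => /desc.
  by rewrite !in_arcs level => ->; rewrite (balanced_potential bal desc_H pH) eqxx.
by rewrite !in_arcs level => /andP[].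
Qed.

Definition eulerian_sign d : int := \sum_(H | eulerian d H) (-1) ^+ #|H|.

Lemma AT_orientationE d : AT_orientation d = (eulerian_sign d != 0).
Proof.
rewrite /AT_orientation /eulerian_sign (bigID (fun H => odd #|H|)) /=.
rewrite (eq_bigr (fun _ => -1)); last by move=> H /andP[_ o]; rewrite -signr_odd o.
rewrite [X in _ + X](eq_bigr (fun _ => 1)); last first.
  by move=> H /andP[_ e]; rewrite -signr_odd (negbTE e).
rewrite (eq_bigl (fun H => H \in OE d)); last by move=> H; rewrite inE.
rewrite [X in _ + X](eq_bigl (fun H => H \in EE d)); last by move=> H; rewrite inE.
by rewrite !sumr_const addrC mulNrn subr_eq0 eqr_nat.
Qed.

Lemma eq_eulerian_sign d d' :
  eulerian d =1 eulerian d' -> eulerian_sign d = eulerian_sign d'.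
Proof. exact: eq_bigl. Qed.

Lemma eulerian_signE d :
  eulerian_sign d =
  \sum_(H : {set T * T} | H \subset arcs d) (if balanced H then (-1) ^+ #|H| else 0).
Proof. by rewrite -big_mkcondr. Qed.

Lemma balanced_at_setUr S H1 H2 x :
    {in H2, forall p, (p.1 \notin S) && (p.2 \notin S)} -> x \in S ->
  balanced_at (H1 :|: H2) x = balanced_at H1 x.
Proof.
move=> out2 xS.
have drop2 (f : T * T -> T) : {in H2, forall p, f p \notin S} ->
    [set p in H1 :|: H2 | f p == x] = [set p in H1 | f p == x].
  move=> f2; apply/setP => p; rewrite !inE.
  case: eqP => [fx|]; rewrite ?andbF ?andbT //.
  by case/boolP: (p \in H2) => [/f2|]; rewrite ?orbF // fx xS.
by rewrite /balanced_at !drop2 // => p /out2 /andP[].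
Qed.

Lemma balanced_at0 x : balanced_at set0 x.
Proof. by rewrite /balanced_at; apply/eqP; apply: eq_card => p; rewrite !inE. Qed.

Lemma balanced_setU S H1 H2 :
    {in H1, forall p, (p.1 \in S) && (p.2 \in S)} ->
    {in H2, forall p, (p.1 \notin S) && (p.2 \notin S)} ->
  balanced (H1 :|: H2) = balanced H1 && balanced H2.
Proof.
move=> in1 out2.
have at_x x : balanced_at (H1 :|: H2) x = balanced_at H1 x && balanced_at H2 x.
  have [xS|xNS] := boolP (x \in S).
    (* [balanced_at H2 x] is the instance [H1 = set0] of the same lemma. *)
    rewrite !(balanced_at_setUr _ out2 xS) -[H2]set0U.
    by rewrite (balanced_at_setUr _ out2 xS) balanced_at0 andbT.
  have out1 : {in H1, forall p, (p.1 \notin ~: S) && (p.2 \notin ~: S)}.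
    by move=> p /in1; rewrite !inE !negbK.
  have xCS : x \in ~: S by rewrite inE.
  rewrite setUC !(balanced_at_setUr _ out1 xCS) -[H1]set0U.
  by rewrite (balanced_at_setUr _ out1 xCS) balanced_at0.
apply/forallP/andP => [bal|[/forallP bal1 /forallP bal2] x]; last by rewrite at_x bal1 bal2.
by split; apply/forallP => x; have := bal x; rewrite at_x => /andP[].
Qed.

Lemma eulerian_sign_separated S d1 d2 :
    (forall x y, d1 x y -> (x \in S) && (y \in S)) ->
    (forall x y, d2 x y -> (x \notin S) && (y \notin S)) ->
  eulerian_sign [rel x y | d1 x y || d2 x y] = eulerian_sign d1 * eulerian_sign d2.
Proof.
move=> in1 out2.
have arcsU : arcs [rel x y | d1 x y || d2 x y] = arcs d1 :|: arcs d2.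
  by apply/setP => p; rewrite !inE.
have disj : [disjoint arcs d1 & arcs d2].
  rewrite -setI_eq0; apply/eqP/setP => p; rewrite !inE.
  by apply/negP => /andP[/in1/andP[p1 _] /out2/andP[]]; rewrite p1.
rewrite !eulerian_signE arcsU (sum_subsetU _ disj) mulr_suml.
apply: eq_bigr => H1 /subsetP sub1; rewrite mulr_sumr; apply: eq_bigr => H2 /subsetP sub2.
have disjH : H1 :&: H2 = set0.
  apply/setP => p; rewrite !inE; apply/andP => -[/sub1 p1 /sub2 p2].
  by move: disj; rewrite -setI_eq0 => /eqP/setP/(_ p); rewrite !inE -!in_arcs p1 p2.
rewrite (@balanced_setU S); first last.
- by move=> p /sub2; rewrite in_arcs => /out2.
- by move=> p /sub1; rewrite in_arcs => /in1.
rewrite cardsU disjH cards0 subn0 exprD.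
by case: (balanced H1); case: (balanced H2); rewrite ?mul0r ?mulr0.
Qed.
End Eulerian.

Lemma card_ord_ltn n m : (m <= n)%N -> #|[set j : 'I_n | (j < m)%N]| = m.
Proof.
move=> le_mn.
have -> : [set j : 'I_n | (j < m)%N] = widen_ord le_mn @: setT.
  apply/setP => j; rewrite inE; apply/idP/imsetP => [jm|[j' _ ->]]; last exact: (ltn_ord j').
  by exists (Ordinal jm); [rewrite inE | apply: val_inj].
by rewrite card_imset ?cardsT ?card_ord // => a b /(congr1 val) /= /val_inj.
Qed.

Section CliqueOrientation.
Variables (T : finType) (e d : rel T) (k : nat) (v : 'I_k -> T).
Hypotheses (v_inj : injective v) (v_clique : forall i j, i != j -> e (v i) (v j)).
Hypotheses (d_orients : forall x y, e x y -> d x y (+) d y x).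
Hypothesis outdeg_v : forall i, outdeg d (v i) = i.

Lemma clique_outneighbours (i : 'I_k) :
  [set y | d (v i) y] = v @: [set j : 'I_k | (j < i)%N].
Proof.
have [n] := ubnP i; elim: n i => // n IH i; rewrite ltnS => le_in.
have card_out : #|[set y | d (v i) y]| = i := outdeg_v i.
apply/esym/eqP; rewrite eqEcard card_imset // card_ord_ltn; last exact: ltnW (ltn_ord i).
rewrite card_out leqnn andbT.
apply/subsetP => y /imsetP[j]; rewrite inE => lt_ji ->; rewrite inE.
have ij : i != j by apply: contraTneq lt_ji => ->; rewrite ltnn.
have := d_orients (v_clique ij).
case: (boolP (d (v j) (v i))) => [dji|_]; last by rewrite addbF.
have : v i \in [set y | d (v j) y] by rewrite inE.
rewrite IH ?(leq_trans lt_ji) // => /imsetP[i' + /v_inj eii'].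
by rewrite inE -eii' => /(ltn_trans lt_ji); rewrite ltnn.
Qed.

Lemma clique_arc (i : 'I_k) y : d (v i) y -> exists2 j : 'I_k, y = v j & (j < i)%N.
Proof.
move=> dy; have : y \in [set y | d (v i) y] by rewrite inE.
by rewrite clique_outneighbours => /imsetP[j]; rewrite inE; exists j.
Qed.
End CliqueOrientation.

Section CliqueSum.
Variables (T : finType) (V1 V2 : {set T}) (G1 G2 G : rel T).
Variables (k : nat) (v : 'I_k -> T) (d1 d2 : rel T).
Let K := [set v i | i : 'I_k].
Hypotheses (v_inj : injective v) (V1I2 : V1 :&: V2 = K).
Hypotheses (G1_V1 : forall x y, G1 x y -> (x \in V1) && (y \in V1))
           (G2_V2 : forall x y, G2 x y -> (x \in V2) && (y \in V2))
           (G_irr : forall x, ~~ G x x).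
Hypotheses (K_clique1 : forall x y, x \in K -> y \in K -> x != y -> G1 x y)
           (K_clique2 : forall x y, x \in K -> y \in K -> x != y -> G2 x y).
Hypotheses (G_sub : forall x y, G x y -> G1 x y || G2 x y)
           (G_sup : forall x y, G1 x y || G2 x y -> ~~ ((x \in K) && (y \in K)) -> G x y).
Hypotheses (d1_sub : forall x y, d1 x y -> G1 x y && G x y)
           (d1_orients : forall x y, G1 x y && G x y -> d1 x y (+) d1 y x)
           (d2_sub : forall x y, d2 x y -> G2 x y)
           (d2_orients : forall x y, G2 x y -> d2 x y (+) d2 y x)
           (outdeg_d2 : forall i : 'I_k, outdeg d2 (v i) = i).

Definition glue : rel T := [rel x y | if x \in V1 then d1 x y else d2 x y].

Lemma glueE x y : glue x y = if x \in V1 then d1 x y else d2 x y.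
Proof. by []. Qed.

Lemma outdeg_glue x : outdeg glue x = if x \in V1 then outdeg d1 x else outdeg d2 x.
Proof. by rewrite /outdeg; case: ifP => x1; apply: eq_card => y; rewrite !inE glueE x1. Qed.

Lemma v_in_K i : v i \in K.
Proof. exact: imset_f. Qed.

Lemma K_V1 x : x \in K -> x \in V1.
Proof. by rewrite -V1I2 inE => /andP[]. Qed.

Lemma K_V2 x : x \in V2 -> (x \in K) = (x \in V1).
Proof. by move=> x2; rewrite -V1I2 inE x2 andbT. Qed.

Lemma d1_V1 x y : d1 x y -> (x \in V1) && (y \in V1).
Proof. by move/d1_sub/andP => [/G1_V1]. Qed.

Lemma d2_V2 x y : d2 x y -> (x \in V2) && (y \in V2).
Proof. by move/d2_sub/G2_V2. Qed.

Lemma d2_clique_arc (i : 'I_k) y : d2 (v i) y -> exists2 j : 'I_k, y = v j & (j < i)%N.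
Proof.
apply: (clique_arc v_inj _ d2_orients outdeg_d2) => {}i j ij.
by apply: K_clique2; rewrite ?v_in_K ?(inj_eq v_inj).
Qed.

Lemma d2_K_closed x y : d2 x y -> x \in K -> y \in K.
Proof.
move=> dxy /imsetP[i _ xi]; move: dxy; rewrite xi => /d2_clique_arc[j -> _].
exact: v_in_K.
Qed.

Definition K_rank x := if x \in K then outdeg d2 x else k.

Lemma d2_K_rank x y : d2 x y -> y \in K -> (K_rank y < K_rank x)%N.
Proof.
move=> dxy /imsetP[j _ yj]; rewrite /K_rank yj v_in_K outdeg_d2.
case: ifP => [/imsetP[i _ xi]|_]; last exact: ltn_ord.
by move: dxy; rewrite xi yj outdeg_d2 => /d2_clique_arc[j' /v_inj ->].
Qed.

Lemma eulerian_d2 :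
  eulerian d2 =1 eulerian [rel x y | [&& d2 x y, x \notin K & y \notin K]].
Proof.
apply: (eulerian_level (phi := K_rank)) => x y /=.
  move=> dxy; case yK: (y \in K); first exact/ltnW/d2_K_rank.
  by rewrite /K_rank yK (negbTE (contraFN (d2_K_closed dxy) yK)).
case dxy: (d2 x y) => //=; case yK: (y \in K) => /=.
  by rewrite andbF gtn_eqF ?d2_K_rank.
have xK : x \notin K := contraFN (d2_K_closed dxy) yK.
by rewrite xK /K_rank (negbTE xK) yK eqxx.
Qed.

Lemma eulerian_glue :
  eulerian glue =1 eulerian [rel x y | d1 x y || [&& d2 x y, x \notin K & y \notin K]].
Proof.
apply: (eulerian_level (phi := fun x => nat_of_bool (x \notin V1))) => x y /=.
all: rewrite glueE.
  case: ifP => x1; last by case: (y \notin V1).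
  by move/d1_V1 => /andP[_ ->].
case: ifP => x1.
  have -> : [&& d2 x y, x \notin K & y \notin K] = false.
    by apply/and3P => -[/d2_V2/andP[x2 _]]; rewrite K_V2 // x1.
  by rewrite orbF; case/boolP: (d1 x y) => // /d1_V1/andP[_ ->].
have -> : d1 x y = false by apply/negP => /d1_V1; rewrite x1.
case/boolP: (d2 x y) => //= /d2_V2/andP[x2 y2].
by rewrite !K_V2 // x1 /=; case: (y \in V1).
Qed.

Lemma eulerian_sign_glue : eulerian_sign glue = eulerian_sign d1 * eulerian_sign d2.
Proof.
rewrite (eq_eulerian_sign eulerian_glue) (eq_eulerian_sign eulerian_d2).
apply: (eulerian_sign_separated (S := V1)) => x y /=; first exact: d1_V1.
by case/and3P => /d2_V2/andP[x2 y2]; rewrite !K_V2 // => -> ->.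
Qed.

Lemma glue_sub x y : glue x y -> G x y.
Proof.
rewrite glueE; case: ifP => x1 dxy; first by case/andP: (d1_sub dxy).
have /andP[x2 _] := d2_V2 dxy.
by apply: G_sup; rewrite ?d2_sub ?orbT // K_V2 // x1.
Qed.

Lemma glue_orients x y : G x y -> glue x y (+) glue y x.
Proof.
move=> Gxy; have [g1|g2] := orP (G_sub Gxy).
  by have /andP[x1 y1] := G1_V1 g1; rewrite !glueE x1 y1 d1_orients // g1 Gxy.
have /andP[x2 y2] := G2_V2 g2.
have cross a b : a \in V1 -> a \in V2 -> b \notin V1 ->
    d2 a b (+) d2 b a -> glue a b (+) glue b a.
  move=> a1 a2 b1; rewrite !glueE a1 (negbTE b1).
  have -> : d1 a b = false by apply/negP => /d1_V1; rewrite (negbTE b1) andbF.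
  have -> // : d2 a b = false.
  apply/negP => /d2_K_closed; rewrite K_V2 // a1 => /(_ isT) /K_V1.
  by rewrite (negbTE b1).
case x1: (x \in V1); case y1: (y \in V1).
- have neq : x != y by apply/eqP => exy; move: (G_irr x); rewrite {2}exy Gxy.
  by rewrite !glueE x1 y1 d1_orients // Gxy andbT K_clique1 ?K_V2.
- by apply: cross; rewrite ?y1 ?d2_orients.
- by rewrite addbC; apply: cross; rewrite ?x1 1?addbC ?d2_orients.
- by rewrite !glueE x1 y1 d2_orients.
Qed.

Lemma glue_orientation : is_orientation G glue.
Proof. by split; [apply: glue_sub | apply: glue_orients]. Qed.
End CliqueSum.

Theorem lemma2p3 (T : finType) (V1 V2 : {set T}) (G1 G2 G : rel T)
    (k : nat) (v : 'I_k -> T) (l : int) (d1 d2 : rel T) :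
  (0 < k)%N ->
  injective v ->
  (* G1 on V1, G2 on V2, G on the whole vertex set V1 :|: V2 = T *)
  sgraph V1 G1 -> sgraph V2 G2 -> sgraph [set: T] G ->
  V1 :|: V2 = [set: T] ->
  V1 :&: V2 = [set v i | i : 'I_k] ->
  is_clique G1 [set v i | i : 'I_k] ->
  is_clique G2 [set v i | i : 'I_k] ->
  (* G is a k-clique-sum of G1 and G2 along K = {v_1..v_k} *)
  (forall x y, G x y -> G1 x y || G2 x y) ->
  (forall x y, G1 x y || G2 x y ->
     ~~ ((x \in [set v i | i : 'I_k]) && (y \in [set v i | i : 'I_k])) -> G x y) ->
  (* D1' : AT-orientation of G1' = G1 /\ G, max outdegree <= l *)
  is_orientation (fun x y => G1 x y && G x y) d1 ->
  AT_orientation d1 ->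
  (forall x, x \in V1 -> (outdeg d1 x)%:Z <= l) ->
  (* D2 : AT-orientation of G2, max outdegree <= l, outdeg(v_i) = i-1 *)
  is_orientation G2 d2 ->
  AT_orientation d2 ->
  (forall x, x \in V2 -> (outdeg d2 x)%:Z <= l) ->
  (forall i : 'I_k, outdeg d2 (v i) = i :> nat) ->
  exists d : rel T,
    [/\ is_orientation G d,
        AT_orientation d,
        (forall x, (outdeg d x)%:Z <= l) &
        (forall x, x \in V1 -> outdeg d x = outdeg d1 x)].
Proof.
move=> _ v_inj [_ _ G1_V1] [_ _ G2_V2] [_ G_irr _] V12 V1I2 [_ K_clique1] [_ K_clique2]
  G_sub G_sup [d1_sub d1_orients] AT1 d1_le [d2_sub d2_orients] AT2 d2_le outdeg_d2.
exists (glue V1 d1 d2); split.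
- exact: (glue_orientation v_inj V1I2 G1_V1 G2_V2 G_irr K_clique1 K_clique2
    G_sub G_sup d1_sub d1_orients d2_sub d2_orients outdeg_d2).
- rewrite AT_orientationE (eulerian_sign_glue v_inj V1I2 G1_V1 G2_V2 K_clique2
    d1_sub d2_sub d2_orients outdeg_d2).
  by rewrite mulf_neq0 // -AT_orientationE.
- move=> x; rewrite outdeg_glue; case: ifP => x1; first exact: d1_le.
  by apply: d2_le; move: (in_setT x); rewrite -V12 inE x1.
- by move=> x x1; rewrite outdeg_glue x1.
Qed.
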